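(* Let $\theta\in\mathbb{R}^q$ be constant and let $y=\phi^\top\theta$, with $y$ scalar and $\phi$ an $\mathbb{R}^q$-valued signal, either in continuous time (CT) or in discrete time (DT). Fix $\gamma>0$, a positive gain function $\gamma_g(\cdot)>0$, and initial values $\theta_{g0}\in\mathbb{R}^q$, $\theta_0\in\mathbb{R}^q$. In CT (with $\phi$ bounded and continuous and $\gamma_g$ continuous) define $\dot{\hat\theta}_g=-\gamma_g(t)\phi\phi^\top\hat\theta_g+\gamma_g(t)\phi y$, $\hat\theta_g(0)=\theta_{g0}$; $\dot\Phi=-\gamma_g(t)\phi\phi^\top\Phi$, $\Phi(0)=I_q$; $\dot{\hat\theta}=\gamma\Delta(Y-\Delta\hat\theta)$, $\hat\theta(0)=\theta_0$. In DT (with $\phi$ bounded) define, with $g(k):=1/(\gamma_g(k)+|\phi(k)|^2)$, $\hat\theta_g(k+1)=(I_q-g(k)\phi(k)\phi^\top(k))\hat\theta_g(k)+g(k)\phi(k)y(k)$, $\hat\theta_g(0)=\theta_{g0}$; $\Phi(k+1)=(I_q-g(k)\phi(k)\phi^\top(k))\Phi(k)$, $\Phi(0)=I_q$; $\hat\theta(k+1)=\hat\theta(k)+\frac{\Delta(k)}{\gamma+\Delta^2(k)}(Y(k)-\Delta(k)\hat\theta(k))$, $\hat\theta(0)=\theta_0$. In both cases $\mathcal D:=I_q-\Phi$, $\Delta:=\det\{\mathcal D\}$, $Y:=\mathrm{adj}\{\mathcal D\}(\hat\theta_g-\Phi\theta_{g0})$ (adj denotes the adjugate matrix). If the regression equation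 is identifiable, then $\tilde\theta:=\hat\theta-\theta$ converges to zero exponentially.
   Context: Identifiability: there exist $q$ time instants (positive reals in CT, nonnegative integers in DT) $\tau_1,\dots,\tau_q$ such that $[\phi(\tau_1)|\cdots|\phi(\tau_q)]$ has rank $q$. *)

From HB Require Import structures.
From mathcomp Require Import all_boot all_order all_algebra.
From mathcomp Require Import all_classical all_reals all_analysis.
Set Implicit Arguments. Unset Strict Implicit. Unset Printing Implicit Defensive.
Import Order.TTheory GRing.Theory Num.Theory.
Local Open Scope ring_scope.

Definition yout (R : ringType) (T : Type) (q : nat)
  (phi : T -> 'cV[R]_q) (theta : 'cV[R]_q) (t : T) : R :=
  ((phi t)^T *m theta) ord0 ord0.

Definition DDmx (R : comRingType) (q : nat) (Phi : 'M[R]_q) : 'M[R]_q :=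
  1%:M - Phi.
Definition Delta (R : comRingType) (q : nat) (Phi : 'M[R]_q) : R :=
  \det (DDmx Phi).
Definition Yreg (R : comRingType) (q : nat) (Phi : 'M[R]_q)
  (thg thg0 : 'cV[R]_q) : 'cV[R]_q :=
  \adj (DDmx Phi) *m (thg - Phi *m thg0).

Definition identifiable (R : fieldType) (T : Type) (q : nat)
  (admissible : T -> Prop) (phi : T -> 'cV[R]_q) : Prop :=
  exists tau : 'I_q -> T, (forall j, admissible (tau j)) /\
    \rank (\matrix_(i < q, j < q) phi (tau j) i ord0) = q.

Definition dt_gain (R : fieldType) (q : nat) (gg : nat -> R)
  (phi : nat -> 'cV[R]_q) (k : nat) : R :=
  (gg k + \sum_(i < q) (phi k i ord0) ^+ 2)^-1.

Definition dt_step (R : fieldType) (q : nat) (gg : nat -> R)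
  (phi : nat -> 'cV[R]_q) (k : nat) : 'M[R]_q :=
  1%:M - dt_gain gg phi k *: (phi k *m (phi k)^T).

Fixpoint dt_thg (R : fieldType) (q : nat) (gg : nat -> R)
  (phi : nat -> 'cV[R]_q) (theta thg0 : 'cV[R]_q) (k : nat) : 'cV[R]_q :=
  match k with
  | 0 => thg0
  | k'.+1 => dt_step gg phi k' *m dt_thg gg phi theta thg0 k'
             + (dt_gain gg phi k' * yout phi theta k') *: phi k'
  end.

Fixpoint dt_Phi (R : fieldType) (q : nat) (gg : nat -> R)
  (phi : nat -> 'cV[R]_q) (k : nat) : 'M[R]_q :=
  match k with
  | 0 => 1%:M
  | k'.+1 => dt_step gg phi k' *m dt_Phi gg phi k'
  end.

Fixpoint dt_th (R : fieldType) (q : nat) (gamma : R) (gg : nat -> R)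
  (phi : nat -> 'cV[R]_q) (theta thg0 th0 : 'cV[R]_q) (k : nat) : 'cV[R]_q :=
  match k with
  | 0 => th0
  | k'.+1 =>
      let De := Delta (dt_Phi gg phi k') in
      dt_th gamma gg phi theta thg0 th0 k'
      + (De / (gamma + De ^+ 2)) *:
          (Yreg (dt_Phi gg phi k') (dt_thg gg phi theta thg0 k') thg0
           - De *: dt_th gamma gg phi theta thg0 th0 k')
  end.

From HB Require Import structures.
From mathcomp Require Import all_boot all_order all_algebra.
From mathcomp Require Import perm ring lra.
From mathcomp Require Import all_classical all_reals all_analysis.
Set Implicit Arguments. Unset Strict Implicit. Unset Printing Implicit Defensive.
Import Order.TTheory GRing.Theory Num.Theory.
Import numFieldNormedType.Exports.
Local Open Scope ring_scope.
Local Open Scope classical_set_scope.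

(* Both estimators satisfy [thg = theta + Phi (thg0 - theta)], so [Y = Delta theta] and the
   error obeys [th~' = - gamma Delta^2 th~] (resp. [th~(k+1) = gamma / (gamma + Delta^2) th~(k)]).
   For every [v], [|Phi(t) v|] is nonincreasing in [t], and if it has not decreased by time [T]
   then [v] is orthogonal to the regressors [phi(s)], [s < T].  Identifiability thus makes
   [Phi(T)] a strict, hence uniform, contraction, so [|Phi(t) v|^2 <= (1 - e) |v|^2] for all
   [t >= T].  Then [I - Phi(t)] is uniformly coercive, its inverse has bounded entries, and
   [Delta(t)^2 = det (I - Phi(t))^2] stays above some [d > 0]: the error decays like
   [exp (- gamma d t)] (resp. [(gamma / (gamma + d))^k]). *)

Section DotProduct.
Variables (R : realFieldType) (q : nat).
Implicit Types (u v w : 'cV[R]_q) (a : R).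

Definition dotv u v : R := (u^T *m v) 0 0.
Definition sqnorm v : R := dotv v v.

Lemma dotvE u v : dotv u v = \sum_i u i 0 * v i 0.
Proof. by rewrite /dotv mxE; apply: eq_bigr => i _; rewrite mxE. Qed.

Lemma dotvC u v : dotv u v = dotv v u.
Proof. by rewrite !dotvE; apply: eq_bigr => i _; rewrite mulrC. Qed.

Lemma dotvDr u v w : dotv u (v + w) = dotv u v + dotv u w.
Proof. by rewrite !dotvE -big_split; apply: eq_bigr => i _; rewrite mxE mulrDr. Qed.

Lemma dotvNr u v : dotv u (- v) = - dotv u v.
Proof. by rewrite !dotvE -sumrN; apply: eq_bigr => i _; rewrite mxE mulrN. Qed.

Lemma dotvZr a u v : dotv u (a *: v) = a * dotv u v.
Proof. by rewrite !dotvE mulr_sumr; apply: eq_bigr => i _; rewrite mxE mulrCA. Qed.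

Lemma dotvDl u v w : dotv (u + v) w = dotv u w + dotv v w.
Proof. by rewrite dotvC dotvDr !(dotvC w). Qed.

Lemma dotvNl u v : dotv (- u) v = - dotv u v.
Proof. by rewrite dotvC dotvNr dotvC. Qed.

Lemma dotvZl a u v : dotv (a *: u) v = a * dotv u v.
Proof. by rewrite dotvC dotvZr dotvC. Qed.

Lemma dotv0r u : dotv u 0 = 0.
Proof. by rewrite -(scale0r 0) dotvZr mul0r. Qed.

Lemma dotv_mulmxr (A : 'M[R]_q) u v : dotv u (A *m v) = dotv (A^T *m u) v.
Proof. by rewrite /dotv trmx_mul trmxK mulmxA. Qed.

Lemma sqnorm_ge0 v : 0 <= sqnorm v.
Proof. by rewrite /sqnorm dotvE sumr_ge0 // => i _; rewrite -expr2 sqr_ge0. Qed.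

Lemma sqr_coord_le_sqnorm v i : v i 0 ^+ 2 <= sqnorm v.
Proof.
rewrite /sqnorm dotvE (bigD1 i) //= expr2 lerDl sumr_ge0 // => j _.
by rewrite -expr2 sqr_ge0.
Qed.

Lemma sqnorm_eq0 v : (sqnorm v == 0) = (v == 0).
Proof.
apply/eqP/eqP => [v0|->]; last by rewrite /sqnorm dotv0r.
apply/matrixP => i j; rewrite (ord1 j) mxE; apply/eqP.
by rewrite -sqrf_eq0 eq_le sqr_ge0 -v0 sqr_coord_le_sqnorm.
Qed.

Lemma sqnorm_gt0 v : (0 < sqnorm v) = (v != 0).
Proof. by rewrite lt_def sqnorm_ge0 andbT sqnorm_eq0. Qed.

Lemma sqnorm_subZ v w a :
  sqnorm (v - a *: w) = sqnorm v - 2 * a * dotv w v + a ^+ 2 * sqnorm w.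
Proof.
by rewrite /sqnorm !(dotvDl, dotvDr, dotvNl, dotvNr, dotvZl, dotvZr) (dotvC v w); ring.
Qed.

Lemma mulmx_rank1 (phi w : 'cV[R]_q) : phi *m phi^T *m w = dotv phi w *: phi.
Proof. by rewrite -mulmxA [phi^T *m w]mx11_scalar mul_mx_scalar. Qed.

Lemma dotv_rank1 (phi w : 'cV[R]_q) : dotv w (phi *m phi^T *m w) = dotv phi w ^+ 2.
Proof. by rewrite mulmx_rank1 dotvZr dotvC expr2. Qed.

Lemma full_rank_orthogonal_eq0 (u : 'I_q -> 'cV[R]_q) v :
  \rank (\matrix_(i < q, j < q) u j i 0) = q -> (forall j, dotv (u j) v = 0) -> v = 0.
Proof.
set M := \matrix_(i, j) u j i 0 => rkM uv0.
have Mt_unit : M^T \in unitmx by rewrite -row_free_unit /row_free mxrank_tr rkM.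
have Mtv : M^T *m v = 0.
  apply/matrixP => j k; rewrite (ord1 k) [RHS]mxE -(uv0 j) dotvE mxE.
  by apply: eq_bigr => i _; rewrite !mxE.
by rewrite -[v]mul1mx -(mulVmx Mt_unit) -mulmxA Mtv mulmx0.
Qed.

End DotProduct.

Section UniformContraction.
Variables (R : realFieldType) (q : nat).
Implicit Types (v w : 'cV[R]_q) (A B D P Q : 'M[R]_q).

Lemma quadratic_form_bounded B :
  exists2 K, 0 <= K & forall v, dotv v (B *m v) <= K * sqnorm v.
Proof.
exists (\sum_i \sum_j `|B i j|); first by do 2!apply: sumr_ge0 => ? _.
move=> v; rewrite dotvE mulr_suml; apply: ler_sum => i _.
rewrite mxE mulr_sumr mulr_suml; apply: ler_sum => j _.
rewrite mulrCA (le_trans (real_ler_norm _)) ?num_real // !normrM ler_wpM2l //.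
have := sqr_coord_le_sqnorm v i; have := sqr_coord_le_sqnorm v j.
rewrite -(real_normK (num_real (v i 0))) -(real_normK (num_real (v j 0))).
by have := sqr_ge0 (`|v i 0| - `|v j 0|); nra.
Qed.

(* With [K] bounding the quadratic form of [A^-1] and [l = K + 1], expanding
   [0 <= (l v - A^-1 v)^T A (l v - A^-1 v)] gives [|v|^2 <= l v^T A v]. *)
Lemma psd_unitmx_coercive A :
  A^T = A -> A \in unitmx -> (forall v, 0 <= dotv v (A *m v)) ->
  exists2 c, 0 < c & forall v, c * sqnorm v <= dotv v (A *m v).
Proof.
move=> A_sym A_unit A_psd.
have [K K0 HK] := quadratic_form_bounded (invmx A).
exists (K + 1)^-1 => [|v]; first by rewrite invr_gt0; lra.
set l := K + 1; set y := invmx A *m v.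
have Ay : A *m y = v by rewrite /y mulmxA mulmxV // mul1mx.
have := A_psd (l *: v - y).
rewrite mulmxBr -scalemxAr Ay !(dotvDl, dotvDr, dotvNl, dotvNr, dotvZl, dotvZr).
rewrite [dotv y _]dotv_mulmxr A_sym Ay [dotv y v]dotvC.
have := HK v; have := sqnorm_ge0 v.
by rewrite /sqnorm ler_pdivrMl /l; [nra | lra].
Qed.

Lemma strict_contraction_uniform P :
  (forall v, v != 0 -> sqnorm (P *m v) < sqnorm v) ->
  exists2 e, 0 < e & forall v, sqnorm (P *m v) <= (1 - e) * sqnorm v.
Proof.
move=> P_strict; set A := 1%:M - P^T *m P.
have quadA v : dotv v (A *m v) = sqnorm v - sqnorm (P *m v).
  by rewrite /A mulmxBl mul1mx -mulmxA dotvDr dotvNr dotv_mulmxr trmxK.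
have A_psd v : 0 <= dotv v (A *m v).
  rewrite quadA subr_ge0; have [->|v0] := eqVneq v 0; first by rewrite mulmx0.
  exact/ltW/P_strict.
have A_sym : A^T = A by rewrite /A linearB /= trmx1 trmx_mul trmxK.
have A_unit : A \in unitmx.
  rewrite unitmxE unitfE; apply/negP => /det0P [w w0 wA].
  have Aw : A *m w^T = 0 by rewrite -A_sym -trmx_mul wA trmx0.
  have /P_strict : w^T != 0 by rewrite -trmx0 (inj_eq trmx_inj).
  by rewrite -subr_gt0 -quadA Aw dotv0r ltxx.
have [c c0 Hc] := psd_unitmx_coercive A_sym A_unit A_psd.
by exists c => // v; have := Hc v; rewrite quadA; lra.
Qed.

(* Multiply the goal by [1 + e/2] and use [|v - (1 + e/2) Q v|^2 >= 0]. *)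
Lemma contraction_1subr_coercive e Q : 0 < e <= 1 ->
  (forall v, sqnorm (Q *m v) <= (1 - e) * sqnorm v) ->
  forall v, e ^+ 2 / 8 * sqnorm v <= sqnorm ((1%:M - Q) *m v).
Proof.
move=> /andP [e0 e1] HQ v.
have := sqnorm_ge0 (v - (1 + e / 2) *: (Q *m v)); rewrite sqnorm_subZ.
have -> : (1%:M - Q) *m v = v - 1 *: (Q *m v) by rewrite mulmxBl mul1mx scale1r.
rewrite sqnorm_subZ.
have := HQ v; have := sqnorm_ge0 v; have := sqnorm_ge0 (Q *m v).
set n := sqnorm v; set m := sqnorm (Q *m v); set d := dotv (Q *m v) v.
rewrite !expr1n !mul1r => m0 n0 mn H.
have Hm : (1 + e / 2) * (e / 2) * m <= (1 + e / 2) * (e / 2) * ((1 - e) * n).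
  by rewrite ler_wpM2l // mulr_ge0 //; lra.
have lT : e ^+ 2 / 4 * n <= (1 + e / 2) * (n - 2 * 1 * d + m).
  have -> : (1 + e / 2) * (n - 2 * 1 * d + m) =
    (n - 2 * (1 + e / 2) * d + (1 + e / 2) ^+ 2 * m) + e / 2 * n
    - (1 + e / 2) * (e / 2) * m by ring.
  have : e ^+ 2 / 4 * n <= e / 2 * n - (1 + e / 2) * (e / 2) * ((1 - e) * n).
    have -> : e / 2 * n - (1 + e / 2) * (e / 2) * ((1 - e) * n) =
      e ^+ 2 / 4 * n + e ^+ 3 / 4 * n by field.
    by rewrite lerDl mulr_ge0 // divr_ge0 // exprn_ge0 // ltW.
  lra.
nra.
Qed.

Lemma coercive_unitmx c D : 0 < c ->
  (forall v, c * sqnorm v <= sqnorm (D *m v)) -> D \in unitmx.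
Proof.
move=> c0 HD; rewrite unitmxE unitfE -det_tr; apply/negP => /det0P [w w0 wD].
have Dw : D *m w^T = 0 by rewrite -[D]trmxK -trmx_mul wD trmx0.
have := HD w^T; rewrite Dw /sqnorm dotv0r pmulr_rle0 // leNgt.
by rewrite [_ < _]sqnorm_gt0 -trmx0 (inj_eq trmx_inj) w0.
Qed.

Lemma coercive_invmx_coef c D : 0 < c ->
  (forall v, c * sqnorm v <= sqnorm (D *m v)) -> forall i j, `|invmx D i j| <= 1 + c^-1.
Proof.
move=> c0 HD i j; have D_unit := coercive_unitmx c0 HD.
set u := col j (invmx D).
have Du : D *m u = delta_mx j 0 by rewrite /u colE mulmxA mulmxV // mul1mx.
have sqnorm_delta : sqnorm (delta_mx j 0 : 'cV[R]_q) = 1.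
  rewrite /sqnorm dotvE (bigD1 j) //= big1 ?addr0 => [|k /negbTE kj].
    by rewrite mxE !eqxx mulr1.
  by rewrite mxE kj mul0r.
have : u i 0 ^+ 2 <= c^-1.
  rewrite -(ler_pM2l c0) mulrV ?unitfE ?gt_eqF //.
  apply: le_trans (ler_wpM2l (ltW c0) (sqr_coord_le_sqnorm u i)) _.
  by rewrite (le_trans (HD u)) // Du sqnorm_delta.
rewrite /u mxE -(real_normK (num_real (invmx D i j))).
by have := sqr_ge0 (`|invmx D i j| - 1); nra.
Qed.

Lemma normr_det_le b A : (forall i j, `|A i j| <= b) ->
  `|\det A| <= q`!%:R * b ^+ q.
Proof.
move=> Ab; rewrite (le_trans (ler_norm_sum _ _ _)) //.
rewrite -card_Sn -mulr_natl -sumr_const mulr1 mulr_suml; apply: ler_sum => s _.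
rewrite mul1r normrM normr_sign mul1r normr_prod -[q in b ^+ q]card_ord -prodr_const.
by apply: ler_prod => i _; rewrite normr_ge0 Ab.
Qed.

(* [det D * det D^-1 = 1] and the entries of [D^-1] are bounded in terms of [c] only. *)
Lemma coercive_det_sqr_ge c : 0 < c ->
  exists2 d, 0 < d & forall D,
    (forall v, c * sqnorm v <= sqnorm (D *m v)) -> d <= \det D ^+ 2.
Proof.
move=> c0; set N := q`!%:R * (1 + c^-1) ^+ q.
have N0 : 0 < N.
  by rewrite mulr_gt0 ?exprn_gt0 ?ltr0n ?fact_gt0 // ltr_wpDr ?invr_ge0 ?ltW.
exists (N ^+ 2)^-1 => [|D HD]; first by rewrite invr_gt0 exprn_gt0.
have D_unit := coercive_unitmx c0 HD.
have invD_det := normr_det_le (coercive_invmx_coef c0 HD).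
have : 1 <= `|\det D| * N.
  rewrite -(normr1 R) -(det1 R q) -(mulmxV D_unit) det_mulmx normrM.
  by rewrite ler_wpM2l.
rewrite -(real_normK (num_real (\det D))) -[_^-1]mul1r ler_pdivrMr ?exprn_gt0 // -exprMn.
by move=> h; rewrite expr2 (le_trans h) // ler_peMr // (le_trans ler01 h).
Qed.

Lemma strict_contraction_Delta_sqr_ge P :
  (forall v, v != 0 -> sqnorm (P *m v) < sqnorm v) ->
  exists2 d, 0 < d & forall Q,
    (forall v, sqnorm (Q *m v) <= sqnorm (P *m v)) -> d <= Delta Q ^+ 2.
Proof.
move=> /strict_contraction_uniform [e e0 He].
have e1_01 : 0 < Num.min e 1 <= 1 by rewrite lt_min e0 ltr01 ge_min lexx orbT.
have [|d d0 Hd] := @coercive_det_sqr_ge (Num.min e 1 ^+ 2 / 8).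
  by rewrite divr_gt0 ?exprn_gt0 //; case/andP: e1_01.
exists d => // Q HQ; apply/Hd/contraction_1subr_coercive => // v.
apply: le_trans (HQ v) (le_trans (He v) _).
by rewrite ler_wpM2r ?sqnorm_ge0 // lerB // ge_min lexx.
Qed.

End UniformContraction.

Lemma Yreg_affine (R : comNzRingType) q (Phi : 'M[R]_q) (theta thg0 : 'cV[R]_q) :
  Yreg Phi (theta + Phi *m (thg0 - theta)) thg0 = Delta Phi *: theta.
Proof.
rewrite /Yreg; have -> : theta + Phi *m (thg0 - theta) - Phi *m thg0 = DDmx Phi *m theta.
  by rewrite /DDmx mulmxBl mul1mx mulmxBr addrA addrAC addrK.
by rewrite mulmxA mul_adj_mx mul_scalar_mx.
Qed.

Lemma geometric_decay (R : realFieldType) (a : nat -> R) (rho : R) (K : nat) :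
  0 < rho <= 1 -> 0 <= a 0%N -> (forall k, a k.+1 <= a k) ->
  (forall k, (K <= k)%N -> a k.+1 <= rho * a k) ->
  forall k, a k <= a 0%N / rho ^+ K * rho ^+ k.
Proof.
move=> /andP [rho0 rho1] a0 a_nonincr a_contr k.
have a_le0 m : a m <= a 0%N.
  by elim: m => // m IH; exact: le_trans (a_nonincr m) IH.
have rhoK : 0 < rho ^+ K by rewrite exprn_gt0.
rewrite mulrAC -mulrA; case: (leqP K k) => [Kk | kK].
  rewrite -(subnKC Kk) exprD mulrAC divff ?gt_eqF // mul1r.
  elim: (k - K)%N => [|m IH]; first by rewrite addn0 expr0 mulr1.
  rewrite addnS exprS mulrCA (le_trans (a_contr _ (leq_addr _ _))) //.
  by rewrite ler_pM2l.
rewrite (le_trans (a_le0 k)) // ler_peMr // ler_pdivlMr // mul1r.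
by rewrite ler_wiXn2l // ?ltW // ltnW.
Qed.

Section DiscreteTime.
Variables (R : realFieldType) (q : nat) (gg : nat -> R) (phi : nat -> 'cV[R]_q).
Hypothesis gg_gt0 : forall k, 0 < gg k.
Implicit Types (v w : 'cV[R]_q).

Local Notation gain := (dt_gain gg phi).
Local Notation step := (dt_step gg phi).
Local Notation Phi := (dt_Phi gg phi).

Lemma dt_gainE k : gain k = (gg k + sqnorm (phi k))^-1.
Proof. by rewrite /dt_gain /sqnorm dotvE. Qed.

Lemma dt_gain_gt0 k : 0 < gain k.
Proof. by rewrite dt_gainE invr_gt0 ltr_wpDr ?sqnorm_ge0. Qed.

Lemma dt_stepE k w : step k *m w = w - (gain k * dotv (phi k) w) *: phi k.
Proof. by rewrite /dt_step mulmxBl mul1mx -scalemxAl mulmx_rank1 scalerA. Qed.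

Lemma dt_step_sqnorm k w :
  sqnorm (step k *m w) <= sqnorm w - gain k * dotv (phi k) w ^+ 2.
Proof.
rewrite dt_stepE sqnorm_subZ; have g0 := dt_gain_gt0 k.
have gn : gain k * sqnorm (phi k) <= 1.
  by rewrite dt_gainE mulrC ler_pdivrMr ?mul1r ?lerDr ?ltW // ltr_wpDr ?sqnorm_ge0.
set g := gain k; set s := dotv (phi k) w.
have -> : (g * s) ^+ 2 * sqnorm (phi k) = g * s ^+ 2 * (g * sqnorm (phi k)) by ring.
have : g * s ^+ 2 * (g * sqnorm (phi k)) <= g * s ^+ 2.
  by rewrite ler_piMr // mulr_ge0 ?sqr_ge0 ?ltW.
lra.
Qed.

Lemma dt_step_sqnorm_le k w : sqnorm (step k *m w) <= sqnorm w.
Proof.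
apply: le_trans (dt_step_sqnorm k w) _.
by rewrite gerBl mulr_ge0 ?sqr_ge0 ?ltW ?dt_gain_gt0.
Qed.

Lemma dt_step_sqnorm_ge_orth k w : sqnorm w <= sqnorm (step k *m w) -> dotv (phi k) w = 0.
Proof.
move=> /le_trans/(_ (dt_step_sqnorm k w)); rewrite lerBrDr gerDl pmulr_rle0 ?dt_gain_gt0 //.
by move=> s0; apply/eqP; rewrite -sqrf_eq0 eq_le s0 sqr_ge0.
Qed.

Lemma dt_PhiS k v : Phi k.+1 *m v = step k *m (Phi k *m v).
Proof. by rewrite mulmxA. Qed.

Lemma dt_Phi_nonincr v k m : (k <= m)%N -> sqnorm (Phi m *m v) <= sqnorm (Phi k *m v).
Proof.
move=> /subnKC <-; elim: (m - k)%N => [|n IH]; first by rewrite addn0.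
by rewrite addnS dt_PhiS (le_trans (dt_step_sqnorm_le _ _)).
Qed.

(* A vector whose norm [Phi] preserves up to [K] is fixed by all steps before [K],
   hence orthogonal to every regressor [phi k], [k < K]. *)
Lemma dt_Phi_strict_contraction K (tau : 'I_q -> nat) :
  (forall j, tau j < K)%N -> \rank (\matrix_(i < q, j < q) phi (tau j) i ord0) = q ->
  forall v, v != 0 -> sqnorm (Phi K *m v) < sqnorm v.
Proof.
move=> tauK rk v; apply: contraNT; rewrite -leNgt => hle; apply/eqP.
have fixed k : (k <= K)%N -> Phi k *m v = v.
  elim: k => [|k IH kK]; first by rewrite mul1mx.
  have Phik := IH (ltnW kK).
  have : sqnorm v <= sqnorm (step k *m v).
    by rewrite -{2}Phik -dt_PhiS (le_trans hle) ?dt_Phi_nonincr.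
  move/dt_step_sqnorm_ge_orth; rewrite dt_PhiS Phik dt_stepE => ->.
  by rewrite mulr0 scale0r subr0.
apply: (full_rank_orthogonal_eq0 rk) => j; apply: dt_step_sqnorm_ge_orth.
by rewrite -{2}(fixed _ (ltnW (tauK j))) -dt_PhiS fixed.
Qed.

Lemma dt_thgE theta thg0 k :
  dt_thg gg phi theta thg0 k = theta + Phi k *m (thg0 - theta).
Proof.
elim: k => [|k IH] /=; first by rewrite mul1mx addrC subrK.
by rewrite IH -mulmxA mulmxDr !dt_stepE /yout -/(dotv (phi k) theta) addrAC subrK.
Qed.

Lemma dt_th_errorS gamma theta thg0 th0 k : 0 < gamma ->
  dt_th gamma gg phi theta thg0 th0 k.+1 - theta =
  (gamma / (gamma + Delta (Phi k) ^+ 2)) *: (dt_th gamma gg phi theta thg0 th0 k - theta).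
Proof.
move=> gamma0 /=; rewrite dt_thgE Yreg_affine.
set th := dt_th _ _ _ _ _ _ k; set De := Delta (Phi k).
have den0 : gamma + De ^+ 2 != 0 by rewrite gt_eqF // ltr_wpDr ?sqr_ge0.
rewrite -scalerBr scalerA -[theta - th]opprB scalerN.
have -> : gamma / (gamma + De ^+ 2) = 1 - De / (gamma + De ^+ 2) * De by field.
by rewrite scalerBl scale1r addrAC.
Qed.

End DiscreteTime.

Lemma dt_estimation_error_geometric (R : realFieldType) q (theta : 'cV[R]_q) (gamma : R)
    (thg0 th0 : 'cV[R]_q) (phi : nat -> 'cV[R]_q) (gg : nat -> R) :
  0 < gamma -> (forall k, 0 < gg k) -> identifiable (fun _ : nat => True) phi ->
  exists C rho : R, 0 <= rho < 1 /\
    forall k i, `|dt_th gamma gg phi theta thg0 th0 k i ord0 - theta i ord0| <= C * rho ^+ k.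
Proof.
move=> gamma0 gg_gt0 [tau [_ rk]].
set K := (\sum_j tau j).+1.
have tauK j : (tau j < K)%N by rewrite ltnS (bigD1 j) //= leq_addr.
have [d d0 Hd] := strict_contraction_Delta_sqr_ge (dt_Phi_strict_contraction gg_gt0 tauK rk).
set rate := fun k => gamma / (gamma + Delta (dt_Phi gg phi k) ^+ 2).
have rate_gt0 k : 0 < rate k by rewrite divr_gt0 // ltr_wpDr ?sqr_ge0.
have rate_le1 k : rate k <= 1 by rewrite ler_pdivrMr ?mul1r ?lerDl ?sqr_ge0 // ltr_wpDr ?sqr_ge0.
set rho := gamma / (gamma + d).
have rho_gt0 : 0 < rho by rewrite divr_gt0 // addr_gt0.
have rho_lt1 : rho < 1 by rewrite ltr_pdivrMr ?mul1r ?ltrDl // addr_gt0.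
have rate_le_rho k : (K <= k)%N -> rate k <= rho.
  move=> Kk; have dDelta : d <= Delta (dt_Phi gg phi k) ^+ 2.
    by apply: Hd => v; exact: dt_Phi_nonincr.
  rewrite ler_pdivrMr ?ltr_wpDr ?sqr_ge0 // mulrAC ler_pdivlMr ?addr_gt0 //.
  by rewrite ler_pM2l // lerD2l.
set z := fun k => dt_th gamma gg phi theta thg0 th0 k - theta.
set a := fun k => \sum_i `|z k i ord0|.
have a_ge0 k : 0 <= a k by rewrite sumr_ge0.
have zS k : z k.+1 = rate k *: z k by exact: dt_th_errorS.
have aS k : a k.+1 = rate k * a k.
  rewrite /a mulr_sumr; apply: eq_bigr => i _.
  by rewrite zS mxE normrM gtr0_norm.
exists (a 0%N / rho ^+ K), rho; split => [|k i]; first by rewrite ltW.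
have -> : dt_th gamma gg phi theta thg0 th0 k i ord0 - theta i ord0 = z k i ord0.
  by rewrite !mxE.
have rho01 : 0 < rho <= 1 by rewrite rho_gt0 ltW.
apply: le_trans (geometric_decay rho01 (a_ge0 0%N) _ _ k).
- by rewrite /a (bigD1 i) //= lerDl sumr_ge0.
- by move=> m; rewrite aS ler_piMl.
- by move=> m Km; rewrite aS ler_wpM2r ?rate_le_rho.
Qed.

Section RealFunctions.
Variable R : realType.
Implicit Types (A : set R) (f g : R -> R).

Lemma within_continuous_cst A (c : R) : {within A, continuous (fun _ => c)}.
Proof. by apply: continuous_subspaceT => x; exact: cst_continuous. Qed.

Lemma within_continuousN A f : {within A, continuous f} ->
  {within A, continuous (fun s => - f s)}.
Proof. by move=> fc x; exact: continuousN (fc x). Qed.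

Lemma within_continuousM A f g : {within A, continuous f} -> {within A, continuous g} ->
  {within A, continuous (fun s => f s * g s)}.
Proof. by move=> fc gc x; exact: continuousM (fc x) (gc x). Qed.

Lemma within_continuous_sum A n (F : 'I_n -> R -> R) :
  (forall i, {within A, continuous (F i)}) -> {within A, continuous (fun s => \sum_i F i s)}.
Proof.
elim: n F => [|n IH] F Fc.
  under eq_fun do rewrite big_ord0; exact: within_continuous_cst.
under eq_fun do rewrite big_ord_recr /=.
by apply: within_continuousD; [apply: IH => i | exact: Fc].
Qed.

Lemma is_derive_add f g (x df dg : R) : is_derive x 1 f df -> is_derive x 1 g dg ->
  is_derive x 1 (fun s => f s + g s) (df + dg).
Proof. by move=> fd gd; have := is_deriveD fd gd. Qed.

Lemma is_derive_opp f (x df : R) : is_derive x 1 f df -> is_derive x 1 (fun s => - f s) (- df).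
Proof. by move=> fd; have := is_deriveN fd. Qed.

Lemma is_derive_mul f g (x df dg : R) : is_derive x 1 f df -> is_derive x 1 g dg ->
  is_derive x 1 (fun s => f s * g s) (f x * dg + g x * df).
Proof. by move=> fd gd; have := is_deriveM fd gd. Qed.

Lemma is_derive_sumr n (F : 'I_n -> R -> R) (x : R) (dF : 'I_n -> R) :
  (forall i, is_derive x 1 (F i) (dF i)) -> is_derive x 1 (fun s => \sum_i F i s) (\sum_i dF i).
Proof. by move=> Fd; rewrite -fct_sumE; exact: is_derive_sum. Qed.

Lemma is_derive_expRM (k t : R) : is_derive t 1 (fun s => expR (k * s)) (expR (k * t) * k).
Proof.
have kd : is_derive t 1 (fun s => k * s) k.
  by have := is_derive_mul (is_derive_cst k t 1) (is_derive_id t 1); rewrite mulr1 mulr0 addr0.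
exact: is_derive1_comp (is_derive_expR _) kd.
Qed.

Lemma derive_le0_nonincr (a : R) f (df : R -> R) :
  {within [set t | a <= t], continuous f} -> (forall t, a < t -> is_derive t 1 f (df t)) ->
  (forall t, a < t -> df t <= 0) -> forall x y, a <= x -> x <= y -> f y <= f x.
Proof.
move=> fc fd df_le0 x y ax xy; apply: (@ler0_derive1_nincry R f a) => //.
- by move=> t; rewrite in_itv /= andbT => /fd [].
- by move=> t; rewrite in_itv /= andbT => /[dup] /fd fdt /df_le0; rewrite derive1E derive_val.
- by apply: continuous_subspaceW fc => t /=; rewrite in_itv /= andbT.
Qed.

Lemma derive0_cst_on (a b : R) f : {within [set t | a <= t], continuous f} ->
  (forall t, a < t < b -> is_derive t 1 f 0) -> forall x, a <= x <= b -> f x = f a.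
Proof.
move=> fc fd x /andP [ax xb]; have ab := le_trans ax xb.
have fc' : {within `[a, b], continuous f}.
  by apply: continuous_subspaceW fc => t /=; rewrite in_itv /= => /andP [].
have fdv t : t \in `]a, b[%R -> derivable f t 1 by rewrite in_itv /= => /fd [].
have fd0 t : t \in `]a, b[%R -> f^`() t = 0.
  by rewrite in_itv /= => /fd fdt; rewrite derive1E derive_val.
have ia : a \in `[a, b]%R by rewrite in_itv /= lexx ab.
have ix : x \in `[a, b]%R by rewrite in_itv /= ax xb.
apply/eqP; rewrite eq_le (ler0_derive1_le_cc fdv) ?(ger0_derive1_le_cc fdv) //.
  by move=> t /fd0 ->.
by move=> t /fd0 ->.
Qed.

End RealFunctions.

Section VectorFunctions.
Variables (R : realType) (q : nat).
Implicit Types (A : set R) (w dw : R -> 'cV[R]_q) (v : 'cV[R]_q).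

Lemma mulmx_coord_continuous A (M : R -> 'M[R]_q) v :
  (forall i j, {within A, continuous (fun s => M s i j)}) ->
  forall i, {within A, continuous (fun s => (M s *m v) i 0)}.
Proof.
move=> Mc i; under eq_fun do rewrite mxE.
apply: within_continuous_sum => j.
by apply: within_continuousM => //; exact: within_continuous_cst.
Qed.

Lemma mulmx_coord_derive (M : R -> 'M[R]_q) (dM : 'M[R]_q) (t : R) v :
  (forall i j, is_derive t 1 (fun s => M s i j) (dM i j)) ->
  forall i, is_derive t 1 (fun s => (M s *m v) i 0) ((dM *m v) i 0).
Proof.
move=> Md i; under eq_fun do rewrite mxE; rewrite mxE; apply: is_derive_sumr => j.
have := is_derive_mul (Md i j) (is_derive_cst (v j 0) t 1).
by rewrite mulr0 add0r mulrC.
Qed.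

Lemma sqnorm_continuous A w : (forall i, {within A, continuous (fun s => w s i 0)}) ->
  {within A, continuous (fun s => sqnorm (w s))}.
Proof.
move=> wc; under eq_fun do rewrite /sqnorm dotvE.
by apply: within_continuous_sum => i; exact: within_continuousM.
Qed.

Lemma sqnorm_derive w (dw : 'cV[R]_q) (t : R) :
  (forall i, is_derive t 1 (fun s => w s i 0) (dw i 0)) ->
  is_derive t 1 (fun s => sqnorm (w s)) (2 * dotv (w t) dw).
Proof.
move=> wd; under eq_fun do rewrite /sqnorm dotvE.
rewrite dotvE mulr_sumr; under eq_bigr do rewrite mulr2n mulrDl !mul1r.
by apply: is_derive_sumr => i; exact: is_derive_mul.
Qed.

Lemma sqnorm_nonincr (a : R) w dw :
  (forall i, {within [set t | a <= t], continuous (fun s => w s i 0)}) ->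
  (forall t i, a < t -> is_derive t 1 (fun s => w s i 0) (dw t i 0)) ->
  (forall t, a < t -> dotv (w t) (dw t) <= 0) ->
  forall x y, a <= x -> x <= y -> sqnorm (w y) <= sqnorm (w x).
Proof.
move=> wc wd dw_le0; apply: (derive_le0_nonincr (sqnorm_continuous wc)).
- by move=> t at0; apply: sqnorm_derive => i; exact: wd.
- by move=> t at0; rewrite pmulr_rle0 ?dw_le0.
Qed.

(* Beyond [T] the function [exp (2 c s) |w s|^2] is nonincreasing. *)
Lemma sqnorm_exp_decay (T c : R) w dw : 0 < T -> 0 <= c ->
  (forall i, {within [set t | 0 <= t], continuous (fun s => w s i 0)}) ->
  (forall (t : R) i, 0 < t -> is_derive t 1 (fun s => w s i 0) (dw t i 0)) ->
  (forall t : R, 0 < t -> dotv (w t) (dw t) <= 0) ->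
  (forall t, T < t -> dotv (w t) (dw t) <= - c * sqnorm (w t)) ->
  forall t : R, 0 <= t -> sqnorm (w t) <= sqnorm (w 0) * expR (2 * c * T) * expR (- (2 * c * t)).
Proof.
move=> T0 c0 wc wd dw_le0 dw_le t t0.
have w_nonincr := sqnorm_nonincr wc wd dw_le0.
have wt_le0 := w_nonincr 0 t (lexx 0) t0.
rewrite -mulrA -expRD; have [tT | Tt] := leP t T.
  apply: (le_trans wt_le0); rewrite ler_peMr ?sqnorm_ge0 //.
  rewrite -expR0 ler_expR subr_ge0 ler_wpM2l // mulr_ge0 //.
set h := fun s : R => expR (2 * c * s) * sqnorm (w s).
have hd (s : R) : 0 < s -> is_derive s 1 h
    (expR (2 * c * s) * (2 * dotv (w s) (dw s)) + sqnorm (w s) * (expR (2 * c * s) * (2 * c))).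
  move=> s0; apply: is_derive_mul; first exact: is_derive_expRM.
  exact: sqnorm_derive (wd s ^~ s0).
have hT : h t <= h T.
  have hc : {within [set s | T <= s], continuous h}.
    apply: continuous_in_subspaceT => s; rewrite inE /= => Ts.
    by have [/derivable1_diffP/differentiable_continuous] := hd s (lt_le_trans T0 Ts).
  apply: (derive_le0_nonincr hc) => //; last exact: ltW.
    by move=> s Ts; exact: hd (lt_trans T0 Ts).
  move=> s /dw_le dws; rewrite (mulrCA (sqnorm _)) -mulrDr pmulr_rle0 ?expR_gt0 //.
  by nra.
have -> : sqnorm (w t) = expR (- (2 * c * t)) * h t by rewrite /h mulrA -expRD addNr expR0 mul1r.
have -> : sqnorm (w 0) * expR (2 * c * T + - (2 * c * t)) =
    expR (- (2 * c * t)) * (expR (2 * c * T) * sqnorm (w 0)) by rewrite expRD; ring.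
rewrite ler_pM2l ?expR_gt0 // (le_trans hT) // ler_pM2l ?expR_gt0 //.
exact: w_nonincr (ltW T0).
Qed.

End VectorFunctions.

Section ContinuousTimeFlow.
Variables (R : realType) (q : nat) (phi : R -> 'cV[R]_q) (gg : R -> R).
Hypothesis gg_gt0 : forall t, 0 < t -> 0 < gg t.
Implicit Types (w : R -> 'cV[R]_q) (v : 'cV[R]_q).

Definition flow_rhs (t : R) v : 'cV[R]_q := - (gg t *: (phi t *m (phi t)^T *m v)).

Definition solves_flow w : Prop :=
  (forall i, {within [set t | 0 <= t], continuous (fun s => w s i 0)}) /\
  (forall (t : R) i, 0 < t -> is_derive t 1 (fun s => w s i 0) (flow_rhs t (w t) i 0)).

Lemma dotv_flow_rhs (t : R) v : dotv v (flow_rhs t v) = - (gg t * dotv (phi t) v ^+ 2).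
Proof. by rewrite dotvNr dotvZr dotv_rank1. Qed.

Lemma flow_sqnorm_nonincr w : solves_flow w ->
  forall x y : R, 0 <= x -> x <= y -> sqnorm (w y) <= sqnorm (w x).
Proof.
case=> wc wd; apply: (sqnorm_nonincr wc wd) => t t0.
by rewrite dotv_flow_rhs oppr_le0 mulr_ge0 ?sqr_ge0 ?ltW ?gg_gt0.
Qed.

Lemma flow_eq0 w : solves_flow w -> w 0 = 0 -> forall t : R, 0 <= t -> w t = 0.
Proof.
move=> wsol w0 t t0; apply/eqP; rewrite -sqnorm_eq0 eq_le sqnorm_ge0 andbT.
by rewrite (le_trans (flow_sqnorm_nonincr wsol (lexx 0) t0)) // w0 /sqnorm dotv0r.
Qed.

Lemma flow_mulmx (Phi : R -> 'M[R]_q) :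
  (forall i j, {within [set t | 0 <= t], continuous (fun s => Phi s i j)}) ->
  (forall (t : R) i j, 0 < t -> is_derive t 1 (fun s => Phi s i j)
     ((- (gg t *: (phi t *m (phi t)^T *m Phi t))) i j)) ->
  forall v, solves_flow (fun s => Phi s *m v).
Proof.
move=> Phic Phid v; split=> [|t i t0]; first exact: mulmx_coord_continuous.
have -> : flow_rhs t (Phi t *m v) = - (gg t *: (phi t *m (phi t)^T *m Phi t)) *m v.
  by rewrite /flow_rhs mulNmx -scalemxAl mulmxA.
exact: mulmx_coord_derive (fun i j => Phid t i j t0) i.
Qed.

(* If the norm is not lost on [[0, T]], it is constant there, so the
   derivative [-2 gg (phi^T w)^2] of [|w|^2] vanishes and [w] is stationary. *)
Lemma flow_sqnorm_preserved_orth (T : R) w : solves_flow w ->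
  sqnorm (w 0) <= sqnorm (w T) -> forall s, 0 < s < T -> dotv (phi s) (w 0) = 0.
Proof.
move=> [wc wd] hle.
have w_nonincr := flow_sqnorm_nonincr (conj wc wd).
have sqnorm_const (s : R) : 0 <= s <= T -> sqnorm (w s) = sqnorm (w 0).
  move=> /andP [s0 sT]; apply/eqP; rewrite eq_le w_nonincr //=.
  by rewrite (le_trans hle) ?w_nonincr.
have orth (s : R) : 0 < s < T -> dotv (phi s) (w s) = 0.
  move=> /andP [s0 sT].
  have d1 := sqnorm_derive (wd s ^~ s0).
  have d2 : is_derive s 1 (fun x => sqnorm (w x)) 0.
    apply: (near_eq_is_derive (f := fun _ : R => sqnorm (w 0))).
    have sT' : s \in `]0, T[%R by rewrite in_itv /= s0 sT.
    apply: filterS (near_in_itvoo sT') => x; rewrite in_itv /= => /andP [x0 xT].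
    by rewrite sqnorm_const // !ltW.
  have := @derive_val _ _ _ _ _ _ _ d1; rewrite (@derive_val _ _ _ _ _ _ _ d2).
  rewrite dotv_flow_rhs => /esym/eqP.
  by rewrite mulf_eq0 pnatr_eq0 oppr_eq0 mulf_eq0 (gt_eqF (gg_gt0 s0)) sqrf_eq0 => /eqP.
have wconst (s : R) : 0 <= s <= T -> w s = w 0.
  move=> sT; apply/matrixP => i j; rewrite (ord1 j).
  apply: (derive0_cst_on (wc i) _ sT) => t /andP [t0 tT]; have := wd t i t0.
  by rewrite /flow_rhs mulmx_rank1 orth ?t0 ?tT // scale0r scaler0 oppr0 mxE.
move=> s /andP [s0 sT]; rewrite -(wconst s) ?(ltW s0) ?(ltW sT) //.
by apply: orth; rewrite s0 sT.
Qed.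

Lemma ct_Phi_strict_contraction (Phi : R -> 'M[R]_q) (T : R) (tau : 'I_q -> R) :
  Phi 0 = 1%:M ->
  (forall i j, {within [set t | 0 <= t], continuous (fun s => Phi s i j)}) ->
  (forall (t : R) i j, 0 < t -> is_derive t 1 (fun s => Phi s i j)
     ((- (gg t *: (phi t *m (phi t)^T *m Phi t))) i j)) ->
  (forall j, 0 < tau j < T) -> \rank (\matrix_(i < q, j < q) phi (tau j) i ord0) = q ->
  forall v, v != 0 -> sqnorm (Phi T *m v) < sqnorm v.
Proof.
move=> Phi0 Phic Phid tauT rk v; apply: contraNT; rewrite -leNgt => hle; apply/eqP.
apply: (full_rank_orthogonal_eq0 rk) => j.
have := flow_sqnorm_preserved_orth (flow_mulmx Phic Phid v) _ (tauT j).
by rewrite Phi0 mul1mx; apply.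
Qed.

End ContinuousTimeFlow.

Lemma ct_thgE (R : realType) q (theta thg0 : 'cV[R]_q) (phi : R -> 'cV[R]_q)
    (gg : R -> R) (thg : R -> 'cV[R]_q) (Phi : R -> 'M[R]_q) :
  (forall t, 0 < t -> 0 < gg t) ->
  thg 0 = thg0 ->
  (forall i, {within [set t : R | 0 <= t], continuous (fun t => thg t i ord0)}) ->
  (forall (t : R) i, 0 < t -> is_derive t (1 : R) (fun s => thg s i ord0)
     ((- (gg t *: (phi t *m (phi t)^T *m thg t)) + (gg t * yout phi theta t) *: phi t) i ord0)) ->
  Phi 0 = 1%:M ->
  (forall i j, {within [set t : R | 0 <= t], continuous (fun t => Phi t i j)}) ->
  (forall (t : R) i j, 0 < t -> is_derive t (1 : R) (fun s => Phi s i j)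
     ((- (gg t *: (phi t *m (phi t)^T *m Phi t))) i j)) ->
  forall t, 0 <= t -> thg t = theta + Phi t *m (thg0 - theta).
Proof.
move=> gg_gt0 thg0E thgc thgd Phi0 Phic Phid t t0.
set c := thg0 - theta; set f := fun s => thg s - theta - Phi s *m c.
have fE i : (fun s => f s i 0) = (fun s => thg s i 0 + - theta i 0 + - (Phi s *m c) i 0).
  by apply: funext => s; rewrite !mxE.
have [Pcc Pcd] := flow_mulmx Phic Phid c.
have fsol : solves_flow phi gg f.
  split=> [i|s i s0]; rewrite fE.
    apply: within_continuousD; last exact: within_continuousN (Pcc i).
    by apply: within_continuousD; [exact: thgc | exact: within_continuous_cst].
  apply: is_derive_eq; first exact: (is_derive_add (is_derive_add (thgd s i s0)
    (is_derive_cst (- theta i 0) s 1)) (is_derive_opp (Pcd s i s0))).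
  have -> : flow_rhs phi gg s (f s) =
      (- (gg s *: (phi s *m (phi s)^T *m thg s)) + (gg s * yout phi theta s) *: phi s)
      - flow_rhs phi gg s (Phi s *m c).
    rewrite /flow_rhs /f /yout -/(dotv (phi s) theta) -scalerA -mulmx_rank1.
    by rewrite !mulmxBr !scalerBr !opprD !opprK.
  by rewrite [RHS]mxE [X in _ = _ + X]mxE; congr (_ - _); exact: addr0.
have := flow_eq0 gg_gt0 fsol _ t0; rewrite /f thg0E Phi0 mul1mx subrr => /(_ erefl) /eqP.
by rewrite subr_eq0 subr_eq addrC => /eqP.
Qed.

Lemma ct_estimation_error_exponential (R : realType) q (theta : 'cV[R]_q) (gamma : R)
    (thg0 : 'cV[R]_q) (phi : R -> 'cV[R]_q) (gg : R -> R) (thg : R -> 'cV[R]_q)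
    (Phi : R -> 'M[R]_q) (th : R -> 'cV[R]_q) :
  0 < gamma -> (forall t, 0 < t -> 0 < gg t) ->
  thg 0 = thg0 ->
  (forall i, {within [set t : R | 0 <= t], continuous (fun t => thg t i ord0)}) ->
  (forall (t : R) i, 0 < t -> is_derive t (1 : R) (fun s => thg s i ord0)
     ((- (gg t *: (phi t *m (phi t)^T *m thg t)) + (gg t * yout phi theta t) *: phi t) i ord0)) ->
  Phi 0 = 1%:M ->
  (forall i j, {within [set t : R | 0 <= t], continuous (fun t => Phi t i j)}) ->
  (forall (t : R) i j, 0 < t -> is_derive t (1 : R) (fun s => Phi s i j)
     ((- (gg t *: (phi t *m (phi t)^T *m Phi t))) i j)) ->
  (forall i, {within [set t : R | 0 <= t], continuous (fun t => th t i ord0)}) ->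
  (forall (t : R) i, 0 < t -> is_derive t (1 : R) (fun s => th s i ord0)
     (((gamma * Delta (Phi t)) *: (Yreg (Phi t) (thg t) thg0 - Delta (Phi t) *: th t)) i ord0)) ->
  identifiable (fun t : R => 0 < t) phi ->
  exists C a : R, 0 < a /\
    forall t i, 0 <= t -> `|th t i ord0 - theta i ord0| <= C * expR (- (a * t)).
Proof.
move=> gamma0 gg_gt0 thg0E thgc thgd Phi0 Phic Phid thc thd [tau [tau_gt0 rk]].
have thgE := ct_thgE gg_gt0 thg0E thgc thgd Phi0 Phic Phid.
set T := 1 + \sum_j tau j.
have tauT j : 0 < tau j < T.
  rewrite tau_gt0 /T (bigD1 j) //=.
  have : 0 <= \sum_(i | i != j) tau i by rewrite sumr_ge0 // => i _; exact/ltW/tau_gt0.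
  lra.
have T0 : 0 < T.
  by rewrite /T ltr_wpDr // sumr_ge0 // => j _; exact/ltW/tau_gt0.
have [d d0 Hd] :=
  strict_contraction_Delta_sqr_ge (ct_Phi_strict_contraction gg_gt0 Phi0 Phic Phid tauT rk).
set z := fun s => th s - theta.
set dz := fun s => - (gamma * Delta (Phi s) ^+ 2) *: z s.
have zE i : (fun s => z s i 0) = (fun s => th s i 0 + - theta i 0).
  by apply: funext => s; rewrite !mxE.
have zc i : {within [set t : R | 0 <= t], continuous (fun s => z s i 0)}.
  by rewrite zE; apply: within_continuousD; [exact: thc | exact: within_continuous_cst].
have zd (t : R) i : 0 < t -> is_derive t 1 (fun s => z s i 0) (dz t i 0).
  move=> t0; rewrite zE; apply: is_derive_eq.
    exact: is_derive_add (thd t i t0) (is_derive_cst (- theta i 0) t 1).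
  rewrite thgE ?ltW // Yreg_affine -scalerBr scalerA -[theta - _]opprB scalerN -scaleNr.
  by rewrite -mulrA -expr2; exact: addr0.
have dotv_zdz t : dotv (z t) (dz t) = - (gamma * Delta (Phi t) ^+ 2) * sqnorm (z t).
  by rewrite /dz dotvZr.
have dz_le0 (t : R) : 0 < t -> dotv (z t) (dz t) <= 0.
  move=> _; rewrite dotv_zdz mulNr oppr_le0.
  exact: mulr_ge0 (mulr_ge0 (ltW gamma0) (sqr_ge0 _)) (sqnorm_ge0 _).
have dz_le (t : R) : T < t -> dotv (z t) (dz t) <= - (gamma * d) * sqnorm (z t).
  move=> Tt; rewrite dotv_zdz !mulNr lerN2 ler_wpM2r ?sqnorm_ge0 // ler_pM2l //.
  by apply: Hd => v; have := flow_sqnorm_nonincr gg_gt0 (flow_mulmx Phic Phid v) (ltW T0) (ltW Tt).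
have decay := sqnorm_exp_decay T0 (ltW (mulr_gt0 gamma0 d0)) zc zd dz_le0 dz_le.
exists (Num.sqrt (sqnorm (z 0) * expR (2 * (gamma * d) * T))), (gamma * d).
split=> [|t i t0]; first exact: mulr_gt0.
have -> : th t i ord0 - theta i ord0 = z t i 0 by rewrite !mxE.
have e2 : expR (- (2 * (gamma * d) * t)) = expR (- (gamma * d * t)) ^+ 2.
  by rewrite expr2 -expRD; congr expR; ring.
rewrite -sqrtr_sqr -[expR (- _)]gtr0_norm ?expR_gt0 // -sqrtr_sqr -sqrtrM; last first.
  by rewrite mulr_ge0 ?sqnorm_ge0 ?expR_ge0.
by rewrite -e2 ler_wsqrtr // (le_trans (sqr_coord_le_sqnorm _ i) (decay t t0)).
Qed.

Theorem proposition2 (R : realType) (q : nat) (theta : 'cV[R]_q) (gamma : R)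
  (thg0 th0 : 'cV[R]_q) :
  0 < gamma ->
  (* continuous time *)
  (forall (phi : R -> 'cV[R]_q) (gg : R -> R)
          (thg : R -> 'cV[R]_q) (Phi : R -> 'M[R]_q) (th : R -> 'cV[R]_q),
     (exists M : R, forall t i, 0 <= t -> `|phi t i ord0| <= M) ->
     (forall i, {within [set t : R | 0 <= t], continuous (fun t => phi t i ord0)}) ->
     (forall t, 0 <= t -> 0 < gg t) ->
     {within [set t : R | 0 <= t], continuous gg} ->
     (* thg' = -gg phi phi^T thg + gg phi y, thg(0) = thg0 *)
     thg 0 = thg0 ->
     (forall i, {within [set t : R | 0 <= t], continuous (fun t => thg t i ord0)}) ->
     (forall (t : R) i, 0 < t -> is_derive t (1 : R) (fun s => thg s i ord0)
        ((- (gg t *: (phi t *m (phi t)^T *m thg t))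
          + (gg t * yout phi theta t) *: phi t) i ord0)) ->
     (* Phi' = -gg phi phi^T Phi, Phi(0) = I *)
     Phi 0 = 1%:M ->
     (forall i j, {within [set t : R | 0 <= t], continuous (fun t => Phi t i j)}) ->
     (forall (t : R) i j, 0 < t -> is_derive t (1 : R) (fun s => Phi s i j)
        ((- (gg t *: (phi t *m (phi t)^T *m Phi t))) i j)) ->
     (* th' = gamma Delta (Y - Delta th), th(0) = th0 *)
     th 0 = th0 ->
     (forall i, {within [set t : R | 0 <= t], continuous (fun t => th t i ord0)}) ->
     (forall (t : R) i, 0 < t -> is_derive t (1 : R) (fun s => th s i ord0)
        (((gamma * Delta (Phi t)) *:
           (Yreg (Phi t) (thg t) thg0 - Delta (Phi t) *: th t)) i ord0)) ->
     identifiable (fun t : R => 0 < t) phi ->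
     exists C a : R, 0 < a /\
       forall t i, 0 <= t -> `|th t i ord0 - theta i ord0| <= C * expR (- (a * t)))
  /\
  (* discrete time *)
  (forall (phi : nat -> 'cV[R]_q) (gg : nat -> R),
     (exists M : R, forall k i, `|phi k i ord0| <= M) ->
     (forall k, 0 < gg k) ->
     identifiable (fun _ : nat => True) phi ->
     exists C rho : R, 0 <= rho < 1 /\
       forall k i, `|dt_th gamma gg phi theta thg0 th0 k i ord0 - theta i ord0|
                     <= C * rho ^+ k).
Proof.
move=> gamma0; split.
  move=> phi gg thg Phi th _ _ gg_ge0 _ thg0E thgc thgd Phi0 Phic Phid _ thc thd.
  exact: ct_estimation_error_exponential gamma0 (fun t t0 => gg_ge0 t (ltW t0))
    thg0E thgc thgd Phi0 Phic Phid thc thd.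
by move=> phi gg _ gg_gt0; exact: dt_estimation_error_geometric.
Qed.
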